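(* Let $V_0,V_1,V'_1,V'_2,V'_3,\ldots$ be vector bundles and let $$V_0\xrightarrow{K'_0}V'_1\xrightarrow{K'_1}V'_2\xrightarrow{K'_2}V'_3\xrightarrow{K'_3}V'_4\xrightarrow{K'_4}\cdots$$ be a full compatibility complex of differential operators. Let $K_0\colon V_0\to V_1$, $C_1\colon V_1\to V'_1$, $D_1\colon V'_1\to V_1$, $H'_1\colon V'_2\to V'_1$ be differential operators such that $C_1\circ K_0=K'_0$, $D_1\circ K'_0=K_0$ (i.e. the first square with $C_0=D_0=\mathrm{id}$, $H_0=H'_0=0$ is an equivalence up to homotopy), and $$\mathrm{id}-C_1\circ D_1=H'_1\circ K'_1 .$$ Define $K_1\colon V_1\to V_1\oplus V'_2$, $K_1=\bigl(\mathrm{id}-D_1C_1,\ K'_1C_1\bigr)$; $K_2\colon V_1\oplus V'_2\to V'_1\oplus V'_3$, $K_2(x,y)=\bigl(C_1x-H'_1y,\ K'_2y\bigr)$; $K_3\colon V'_1\oplus V'_3\to V'_4$, $K_3(x,y)=K'_3y$; and $K_l=K'_l\colon V'_l\to V'_{l+1}$ for $l\ge4$. Then $K_0,K_1,K_2,\ldots$ is a full compatibility complex for $K_0$. Moreover, together with the vertical maps $C_0=D_0=\mathrm{id}$, $C_1$, $D_1$, $C_2=(0\ \mathrm{id})\colon V_1\oplus V'_2\to V'_2$, $D_2=\bigl(D_1H'_1,\ \mathrm{id}-K'_1H'_1\bigr)\colon V'_2\to V_1\oplus V'_2$, $C_3=(0\ \mathrm{id})\colon V'_1\oplus V'_3\to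 V'_3$, $D_3=(0,\mathrm{id})\colon V'_3\to V'_1\oplus V'_3$, $C_l=D_l=\mathrm{id}$ for $l\ge4$, and homotopies $H_0=H'_0=0$, $H_1=(\mathrm{id}\ 0)\colon V_1\oplus V'_2\to V_1$, $H'_1$ as given, $H_2(x,y)=(D_1x,\,-K'_1x)\colon V'_1\oplus V'_3\to V_1\oplus V'_2$, $H'_2=0$, and $H_l=H'_l=0$ for $l\ge3$, the top complex $(K_l)$ and the bottom complex $(K'_l)$ are equivalent up to homotopy.
   Context: For a linear differential operator $K$, a differential operator $L$ with $L\circ K=0$ is a compatibility operator for $K$; it is complete if every differential operator $L'$ with $L'\circ K=0$ factors as $L'=L''\circ L$ for some differential operator $L''$. A complex of differential operators $K_l$, $l=0,1,\ldots$, is a (full) compatibility complex for $K$ if $K_0=K$ and each $K_l$ ($l\ge1$) is a complete compatibility operator for $K_{l-1}$. Given complexes $(K_l)$ and $(K'_l)$ (with $K_{-1}=K'_{-1}=H_{-1}=H'_{-1}=0$), an equivalence up to homotopy consists of maps $C_l$ (top to bottom) and $D_l$ (bottom to top) that are cochain maps ($K'_l C_l=C_{l+1}K_l$, $K_lD_l=D_{l+1}K'_l$) together with maps $H_l$ (from degree $l+1$ to degree $l$ of the top complex) and $H'_l$ (same for the bottom complex) such that $D_lC_l=\mathrm{id}-K_{l-1}H_{l-1}-H_lK_l$ and $C_lD_l=\mathrm{id}-K'_{l-1}H'_{l-1}-H'_lK'_l$ for all $l$. *)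

(* Abstract setting: the category whose objects are vector
   bundles and whose morphisms are (linear) differential operators is a
   preadditive category (morphisms form abelian groups, composition is
   bilinear) with biproducts (direct sums of bundles). The statement only
   uses this structure, so we state it for an arbitrary such category. *)
From mathcomp Require Import all_boot all_order all_algebra.
Set Implicit Arguments. Unset Strict Implicit. Unset Printing Implicit Defensive.
Import GRing.Theory.
Local Open Scope ring_scope.

Record addCat := AddCat {
  Obj :> Type;
  Mor : Obj -> Obj -> zmodType;
  comp : forall A B C : Obj, Mor B C -> Mor A B -> Mor A C;
  idm : forall A : Obj, Mor A A;
  compA : forall A B C D (h : Mor C D) (g : Mor B C) (f : Mor A B),
      comp h (comp g f) = comp (comp h g) f;
  comp1m : forall A B (f : Mor A B), comp (idm B) f = f;
  compm1 : forall A B (f : Mor A B), comp f (idm A) = f;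
  compDl : forall A B C (g1 g2 : Mor B C) (f : Mor A B),
      comp (g1 + g2) f = comp g1 f + comp g2 f;
  compDr : forall A B C (g : Mor B C) (f1 f2 : Mor A B),
      comp g (f1 + f2) = comp g f1 + comp g f2;
  oplus : Obj -> Obj -> Obj;
  inl : forall A B, Mor A (oplus A B);
  inr : forall A B, Mor B (oplus A B);
  pl : forall A B, Mor (oplus A B) A;
  pr : forall A B, Mor (oplus A B) B;
  pl_inl : forall A B, comp (pl A B) (inl A B) = idm A;
  pr_inr : forall A B, comp (pr A B) (inr A B) = idm B;
  pl_inr : forall A B, comp (pl A B) (inr A B) = 0;
  pr_inl : forall A B, comp (pr A B) (inl A B) = 0;
  inlpl_inrpr : forall A B,
      comp (inl A B) (pl A B) + comp (inr A B) (pr A B) = idm (oplus A B)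
}.

Arguments comp {_ A B C}.
Arguments idm {_ A}.
Arguments inl {_ A B}.
Arguments inr {_ A B}.
Arguments pl {_ A B}.
Arguments pr {_ A B}.
Notation "g ⊚ f" := (comp g f) (at level 40, left associativity).

Section Defs.
Variable Cat : addCat.

Definition compat_op {A B E : Cat} (L : Mor B E) (K : Mor A B) : Prop :=
  L ⊚ K = 0.

Definition complete_compat {A B E : Cat} (L : Mor B E) (K : Mor A B) : Prop :=
  compat_op L K /\
  forall (F : Cat) (L' : Mor B F), L' ⊚ K = 0 -> exists L'' : Mor E F, L' = L'' ⊚ L.

Definition full_compat_complex (X : nat -> Cat) (K : forall l, Mor (X l) (X l.+1))
  (K0 : Mor (X 0) (X 1)) : Prop :=
  K 0 = K0 /\ forall l, complete_compat (K l.+1) (K l).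

(* K_{l-1} H_{l-1}, with the convention K_{-1} = H_{-1} = 0 *)
Definition KHprev (X : nat -> Cat) (K : forall l, Mor (X l) (X l.+1))
  (H : forall l, Mor (X l.+1) (X l)) (l : nat) : Mor (X l) (X l) :=
  match l return Mor (X l) (X l) with
  | 0 => 0
  | n.+1 => K n ⊚ H n
  end.

Definition homotopy_equiv (X Y : nat -> Cat)
  (K : forall l, Mor (X l) (X l.+1)) (K' : forall l, Mor (Y l) (Y l.+1))
  (C : forall l, Mor (X l) (Y l)) (D : forall l, Mor (Y l) (X l))
  (H : forall l, Mor (X l.+1) (X l)) (H' : forall l, Mor (Y l.+1) (Y l)) : Prop :=
  (forall l, K' l ⊚ C l = C l.+1 ⊚ K l) /\
  (forall l, K l ⊚ D l = D l.+1 ⊚ K' l) /\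
  (forall l, D l ⊚ C l = idm - KHprev K H l - H l ⊚ K l) /\
  (forall l, C l ⊚ D l = idm - KHprev K' H' l - H' l ⊚ K' l).

Variables (V' : nat -> Cat) (V1 : Cat).
(* V_0 is V' 0 (the source of K'_0). *)
Definition Wobj (l : nat) : Cat :=
  match l with
  | 0 => V' 0
  | 1 => V1
  | 2 => oplus V1 (V' 2)
  | 3 => oplus (V' 1) (V' 3)
  | n.+4 => V' n.+4
  end.

Variables (K' : forall l, Mor (V' l) (V' l.+1)) (K0 : Mor (V' 0) V1)
  (C1 : Mor V1 (V' 1)) (D1 : Mor (V' 1) V1) (H1' : Mor (V' 2) (V' 1)).

Definition Ktop (l : nat) : Mor (Wobj l) (Wobj l.+1) :=
  match l return Mor (Wobj l) (Wobj l.+1) with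
  | 0 => K0
  | 1 => inl ⊚ (idm - D1 ⊚ C1) + inr ⊚ (K' 1 ⊚ C1)
  | 2 => inl ⊚ (C1 ⊚ pl - H1' ⊚ pr) + inr ⊚ (K' 2 ⊚ pr)
  | 3 => K' 3 ⊚ pr
  | n.+4 => K' n.+4
  end.

Definition Cmap (l : nat) : Mor (Wobj l) (V' l) :=
  match l return Mor (Wobj l) (V' l) with
  | 0 => idm
  | 1 => C1
  | 2 => pr
  | 3 => pr
  | n.+4 => idm
  end.

Definition Dmap (l : nat) : Mor (V' l) (Wobj l) :=
  match l return Mor (V' l) (Wobj l) with
  | 0 => idm
  | 1 => D1
  | 2 => inl ⊚ (D1 ⊚ H1') + inr ⊚ (idm - K' 1 ⊚ H1')
  | 3 => inr
  | n.+4 => idm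
  end.

Definition Hmap (l : nat) : Mor (Wobj l.+1) (Wobj l) :=
  match l return Mor (Wobj l.+1) (Wobj l) with
  | 0 => 0
  | 1 => pl
  | 2 => inl ⊚ (D1 ⊚ pl) - inr ⊚ (K' 1 ⊚ pl)
  | n.+3 => 0
  end.

Definition H'map (l : nat) : Mor (V' l.+1) (V' l) :=
  match l return Mor (V' l.+1) (V' l) with
  | 1 => H1'
  | _ => 0
  end.

End Defs.

(* Completeness of compatibility operators transfers along an equivalence up to
   homotopy: if [L K_l = 0], then [L D_(l+1)] is killed by [K'_l], hence equals
   [M K'_(l+1)], and [id = D C + K H + H K] in degree [l+1] gives
   [L = (M C_(l+2) + L H_(l+1)) K_(l+1)].  So it only remains to check that the top
   sequence is a complex and that the given maps form an equivalence up to homotopy;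
   componentwise on the biproducts these are short computations, all driven by
   [id - C_1 D_1 = H'_1 K'_1] and [K'_(l+1) K'_l = 0]. *)

From Pilot Require Import Defs.
From mathcomp Require Import all_boot all_order all_algebra.
Import GRing.Theory.
Local Open Scope ring_scope.

Set Implicit Arguments.
Unset Strict Implicit.
Unset Printing Implicit Defensive.

Section Preadditive.
Variable Cat : addCat.
Implicit Types A B X : Cat.

Lemma comp0m A B X (f : Mor A B) : (0 : Mor B X) ⊚ f = 0.
Proof. by apply: (addrI (0 ⊚ f)); rewrite -compDl !addr0. Qed.

Lemma compm0 A B X (g : Mor B X) : g ⊚ (0 : Mor A B) = 0.
Proof. by apply: (addrI (g ⊚ 0)); rewrite -compDr !addr0. Qed.

Lemma compNm A B X (g : Mor B X) (f : Mor A B) : (- g) ⊚ f = - (g ⊚ f).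
Proof. by apply/eqP; rewrite -addr_eq0 -compDl addNr comp0m. Qed.

Lemma compmN A B X (g : Mor B X) (f : Mor A B) : g ⊚ (- f) = - (g ⊚ f).
Proof. by apply/eqP; rewrite -addr_eq0 -compDr addNr compm0. Qed.

Lemma oplus_codom_ext A B X (f g : Mor X (oplus A B)) :
  pl ⊚ f = pl ⊚ g -> pr ⊚ f = pr ⊚ g -> f = g.
Proof.
by move=> el er; rewrite -[f]comp1m -[g]comp1m -inlpl_inrpr !compDl -!Defs.compA el er.
Qed.

Lemma oplus_dom_ext A B X (f g : Mor (oplus A B) X) :
  f ⊚ inl = g ⊚ inl -> f ⊚ inr = g ⊚ inr -> f = g.
Proof.
by move=> el er; rewrite -[f]compm1 -[g]compm1 -inlpl_inrpr !compDr !Defs.compA el er.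
Qed.

Lemma compAeq A B X (g : Mor B X) (f : Mor A B) (h : Mor A X) :
  g ⊚ f = h -> forall Z (k : Mor Z A), g ⊚ (f ⊚ k) = h ⊚ k.
Proof. by move=> <- Z k; rewrite Defs.compA. Qed.

Lemma pl_inlK A B X (f : Mor X A) : pl ⊚ (@inl _ A B ⊚ f) = f.
Proof. by rewrite Defs.compA pl_inl comp1m. Qed.

Lemma pr_inrK A B X (f : Mor X B) : pr ⊚ (@inr _ A B ⊚ f) = f.
Proof. by rewrite Defs.compA pr_inr comp1m. Qed.

Lemma pl_inrK A B X (f : Mor X B) : pl ⊚ (@inr _ A B ⊚ f) = 0.
Proof. by rewrite Defs.compA pl_inr comp0m. Qed.

Lemma pr_inlK A B X (f : Mor X A) : pr ⊚ (@inl _ A B ⊚ f) = 0.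
Proof. by rewrite Defs.compA pr_inl comp0m. Qed.

End Preadditive.

Ltac comp_simpl := repeat progress rewrite
  -?Defs.compA ?compDl ?compDr ?compNm ?compmN ?comp0m ?compm0 ?comp1m ?compm1
  ?pl_inl ?pr_inr ?pl_inr ?pr_inl ?pl_inlK ?pr_inrK ?pl_inrK ?pr_inlK
  ?oppr0 ?opprK ?addr0 ?add0r.

Section HomotopyTransfer.
Variables (Cat : addCat) (X Y : nat -> Cat).
Variables (K : forall l, Mor (X l) (X l.+1)) (K' : forall l, Mor (Y l) (Y l.+1)).
Variables (C : forall l, Mor (X l) (Y l)) (D : forall l, Mor (Y l) (X l)).
Variables (H : forall l, Mor (X l.+1) (X l)) (H' : forall l, Mor (Y l.+1) (Y l)).
Hypothesis KK : forall l, K l.+1 ⊚ K l = 0.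
Hypothesis KK'_equiv : homotopy_equiv K K' C D H H'.

Lemma complete_compat_homotopy l :
  complete_compat (K' l.+1) (K' l) -> complete_compat (K l.+1) (K l).
Proof.
case: KK'_equiv => [CK [DK [DC _]]] [_ K'complete].
split=> [|F L LK]; first exact: KK.
have LDK' : (L ⊚ D l.+1) ⊚ K' l = 0 by rewrite -Defs.compA -DK Defs.compA LK comp0m.
have [M LD] := K'complete F _ LDK'.
have L_split : L = L ⊚ D l.+1 ⊚ C l.+1 + L ⊚ H l.+1 ⊚ K l.+1.
  by rewrite -Defs.compA DC /= !compDr !compmN compm1 Defs.compA LK comp0m subr0 Defs.compA subrK.
exists (M ⊚ C l.+2 + L ⊚ H l.+1).
by rewrite {1}L_split LD -[M ⊚ _ ⊚ _]Defs.compA CK Defs.compA compDl.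
Qed.

Lemma full_compat_complex_homotopy K'0 :
  full_compat_complex K' K'0 -> full_compat_complex K (K 0).
Proof. by case=> _ K'complete; split=> // l; exact: complete_compat_homotopy. Qed.

End HomotopyTransfer.

Section Construction.
Variables (Cat : addCat) (V' : nat -> Cat) (V1 : Cat).
Variables (K' : forall l, Mor (V' l) (V' l.+1)) (K0 : Mor (V' 0) V1)
  (C1 : Mor V1 (V' 1)) (D1 : Mor (V' 1) V1) (H1' : Mor (V' 2) (V' 1)).
Hypothesis K'K' : forall l, K' l.+1 ⊚ K' l = 0.
Hypothesis C1K0 : C1 ⊚ K0 = K' 0.
Hypothesis D1K'0 : D1 ⊚ K' 0 = K0.
Hypothesis C1D1_homotopy : idm - C1 ⊚ D1 = H1' ⊚ K' 1.

Local Notation K := (Ktop K' K0 C1 D1 H1').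
Local Notation C := (Cmap C1).
Local Notation D := (Dmap K' D1 H1').
Local Notation H := (Hmap K' D1).
Local Notation H' := (H'map H1').

Lemma Ktop_complex l : K l.+1 ⊚ K l = 0.
Proof.
case: l => [|[|[|[|n]]]] /=; try apply: oplus_codom_ext; comp_simpl.
- by rewrite C1K0 D1K'0 subrr.
- by rewrite C1K0 K'K'.
- by rewrite (compAeq (esym C1D1_homotopy)); comp_simpl; rewrite subrr.
- by rewrite (compAeq (K'K' 1)) comp0m.
- by rewrite (compAeq (K'K' 2)) comp0m.
- by rewrite (compAeq (K'K' 3)) comp0m.
- exact: K'K'.
Qed.

Lemma Cmap_chain l : K' l ⊚ C l = C l.+1 ⊚ K l.
Proof. by case: l => [|[|[|[|n]]]] /=; comp_simpl; rewrite ?C1K0. Qed.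

Lemma Dmap_chain l : K l ⊚ D l = D l.+1 ⊚ K' l.
Proof.
case: l => [|[|[|[|n]]]] /=; try apply: oplus_codom_ext; comp_simpl => //.
- by rewrite -C1D1_homotopy; comp_simpl.
- by rewrite -C1D1_homotopy; comp_simpl; rewrite subKr.
- by rewrite (compAeq (esym C1D1_homotopy)); comp_simpl; rewrite addKr subrr.
- by rewrite (compAeq (K'K' 1)) comp0m subr0.
Qed.

Lemma DC_homotopy l : D l ⊚ C l = idm - KHprev K H l - H l ⊚ K l.
Proof.
case: l => [|[|[|[|n]]]] /=;
  try (apply: oplus_codom_ext; apply: oplus_dom_ext); comp_simpl => //.
- by rewrite subKr.
- by rewrite subKr subrr.
- by rewrite addNr.
- by rewrite -C1D1_homotopy subrKC subrr.
Qed.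

Lemma CD_homotopy l : C l ⊚ D l = idm - KHprev K' H' l - H' l ⊚ K' l.
Proof. by case: l => [|[|[|[|n]]]] /=; comp_simpl; rewrite // -C1D1_homotopy subKr. Qed.

Lemma Ktop_homotopy_equiv : homotopy_equiv K K' C D H H'.
Proof. exact: (conj Cmap_chain (conj Dmap_chain (conj DC_homotopy CD_homotopy))). Qed.

End Construction.

Theorem lemma5p2 (Cat : addCat) (V' : nat -> Cat) (V1 : Cat)
  (K' : forall l, Mor (V' l) (V' l.+1)) (K0 : Mor (V' 0) V1)
  (C1 : Mor V1 (V' 1)) (D1 : Mor (V' 1) V1) (H1' : Mor (V' 2) (V' 1)) :
  @full_compat_complex Cat V' K' (K' 0) ->
  C1 ⊚ K0 = K' 0 ->
  D1 ⊚ K' 0 = K0 ->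
  idm - C1 ⊚ D1 = H1' ⊚ K' 1 ->
  full_compat_complex (@Ktop Cat V' V1 K' K0 C1 D1 H1') K0 /\
  homotopy_equiv (@Ktop Cat V' V1 K' K0 C1 D1 H1') K'
    (@Cmap Cat V' V1 C1) (@Dmap Cat V' V1 K' D1 H1') (@Hmap Cat V' V1 K' D1)
    (@H'map Cat V' H1').
Proof.
move=> K'full C1K0 D1K'0 C1D1_homotopy.
have K'K' l : K' l.+1 ⊚ K' l = 0 by case: K'full => _ /(_ l) [].
have equiv := Ktop_homotopy_equiv K'K' C1K0 D1K'0 C1D1_homotopy.
split; last exact: equiv.
exact: (full_compat_complex_homotopy (Ktop_complex K'K' C1K0 D1K'0 C1D1_homotopy) equiv K'full).
Qed.
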